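(* Let $k$ be an algebraically closed field, $Q'$ a finite acyclic quiver, and $Q$ the subquiver with $Q_0 = Q'_0$ and $Q'_1 = Q_1 \cup \{e'\}$, $e' \notin Q_1$; write $s = s(e')$, $t = t(e')$. Let $M' = (M_v, \varphi_a)_{v \in Q'_0, a \in Q'_1}$ be a representation of $Q'$ over $k$ of total dimension $n = \sum_v \dim M_v$ which is a brick, and such that $\varphi_{e'}: M_s \to M_t$ is not of full rank. Let $M = (M_v, \varphi_a)_{v \in Q_0, a \in Q_1}$ be its restriction to $Q$. Choose complements $M_s = \mathrm{Ker}\,\varphi_{e'} \oplus M'_s$ and $M_t = \mathrm{Im}\,\varphi_{e'} \oplus M'_t$, so that, in block form with respect to these decompositions, $$\varphi_{e'} = \begin{pmatrix} 0 & \varphi \\ 0 & 0\end{pmatrix}$$ with $\varphi: M'_s \to \mathrm{Im}\,\varphi_{e'}$. Fix a basis of $\bigoplus_v M_v$ adapted to these decompositions, with the basis of $M_s$ first, then that of $M_t$, then the remaining vertex spaces, and let $f_0: kQ \to M_n(k)$ be the resulting homomorphism giving the action of $kQ$ on $M$ (so $f_0(e_s)$ and $f_0(e_t)$ are the block-diagonal idempotents $\mathrm{diag}(I_{\dim M_s},0,0)$ and $\mathrm{diag}(0,I_{\dim M_t},0)$). Assume that $\mathrm{Ker}\,\varphi_{e'}$ and $\mathrm{Im}\,\varphi_{e'}$ are invariant under the components at $s$ and $t$, respectively, of every endomorphism of the representation $M$ of $Q$. Then there is a ring epimorphism $f: kQ' \to M_n(k\langle X\rangle)$ which agrees with $f_0$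 on $kQ$ (composed with $M_n(k) \subseteq M_n(k\langle X \rangle)$) and sends $e'$ to the block matrix having $f_{e'}$ in the (rows of $M_t$, columns of $M_s$) block and $0$ elsewhere, where $f_{e'}$, written in block form with respect to $M_s = \mathrm{Ker}\,\varphi_{e'}\oplus M'_s$ and $M_t = \mathrm{Im}\,\varphi_{e'}\oplus M'_t$, is: (i) $f_{e'} = \begin{pmatrix} 0 & \varphi \\ X_{21} & 0 \end{pmatrix}$; (ii) if moreover $M'_s$ is invariant under all endomorphisms of $M$: $f_{e'} = \begin{pmatrix} X_{11} & \varphi \\ X_{21} & 0 \end{pmatrix}$; (iii) if moreover $M'_t$ is invariant under all endomorphisms of $M$: $f_{e'} = \begin{pmatrix} 0 & \varphi \\ X_{21} & X_{22} \end{pmatrix}$; (iv) if moreover both $M'_s$ and $M'_t$ are invariant under all endomorphisms of $M$: $f_{e'} = \begin{pmatrix} X_{11} & \varphi \\ X_{21} & X_{22} \end{pmatrix}$. Here $X_{11}, X_{21}, X_{22}$ are matrices of pairwise distinct indeterminates of the appropriate sizes, and $X$ is the set of all indeterminates appearing in $f_{e'}$.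
   Context: A representation of a quiver is a brick if its endomorphism ring is $k$. $k\langle X\rangle$ is the free associative $k$-algebra on the set $X$. A ring homomorphism $\varphi: R \to S$ is a ring epimorphism if for any two ring homomorphisms $\varrho_1, \varrho_2: S \to T$ with $\varrho_1\varphi = \varrho_2\varphi$ one has $\varrho_1 = \varrho_2$. Right $kQ$-modules are identified with representations of $Q$; an arrow $a$ acts as a matrix supported in the (rows of $M_{t(a)}$, columns of $M_{s(a)}$) block. *)

From HB Require Import structures.
From mathcomp Require Import all_boot all_order all_algebra.
From mathcomp Require Import monalg.
Set Implicit Arguments. Unset Strict Implicit. Unset Printing Implicit Defensive.
Import GRing.Theory.
Local Open Scope ring_scope.

Definition acyclic (V E : finType) (src tgt : E -> V) : Prop :=
  forall (a : E) (p : seq E),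
    path (fun b c => tgt b == src c) a p -> tgt (last a p) != src a.

(* (forced by the matrix conventions of the paper): a = e_t(a) a e_s(a). *)
Definition quiver_rels (V E : finType) (src tgt : E -> V) (B : pzRingType)
    (eB : V -> B) (xB : E -> B) : Prop :=
  [/\ forall v, eB v * eB v = eB v,
      forall v w, v != w -> eB v * eB w = 0,
      \sum_v eB v = 1
    & forall a, xB a = eB (tgt a) * xB a * eB (src a)].

Definition is_path_algebra (k : fieldType) (V E : finType) (src tgt : E -> V)
    (A : algType k) (e : V -> A) (x : E -> A) : Prop :=
  quiver_rels src tgt e x /\
  forall (B : pzRingType) (sigma : {rmorphism k -> B}) (eB : V -> B) (xB : E -> B),
    (forall c b, sigma c * b = b * sigma c) ->
    quiver_rels src tgt eB xB ->
    exists g : {rmorphism A -> B},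
      [/\ forall c, g (c%:A) = sigma c, forall v, g (e v) = eB v,
          forall a, g (x a) = xB a
        & forall g' : {rmorphism A -> B},
            (forall c, g' (c%:A) = sigma c) -> (forall v, g' (e v) = eB v) ->
            (forall a, g' (x a) = xB a) -> g' =1 g].

Definition ring_epi (R S : pzRingType) (f : R -> S) : Prop :=
  forall (T : pzRingType) (g h : {rmorphism S -> T}),
    (forall x, g (f x) = h (f x)) -> forall y, g y = h y.

(* Representations in coordinates.  A representation of total dimension *)
(* n is given by a fixed basis of (+)_v M_v indexed by 'I_n, a map vtx    *)
(* saying to which vertex space each basis vector belongs, and for each   *)
(* arrow a an n x n matrix Arr a (this is f_0(a)) supported in the        *)
(* (rows of M_t(a), columns of M_s(a)) block.                             *)

Definition is_rep (k : fieldType) (V E : finType) (src tgt : E -> V) (n : nat)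
    (vtx : 'I_n -> V) (Arr : E -> 'M[k]_n) : Prop :=
  forall a i j, Arr a i j != 0 -> (vtx i == tgt a) && (vtx j == src a).

Definition vdiag (k : fieldType) (V : finType) (n : nat) (vtx : 'I_n -> V) (v : V)
  : 'M[k]_n := \matrix_(i, j) ((i == j) && (vtx i == v))%:R.

Definition is_endo (k : fieldType) (V E : finType) (n : nat) (vtx : 'I_n -> V)
    (P : pred E) (Arr : E -> 'M[k]_n) (Phi : 'M[k]_n) : Prop :=
  (forall i j, vtx i != vtx j -> Phi i j = 0) /\
  (forall a, P a -> Phi *m Arr a = Arr a *m Phi).

Definition is_brick (k : fieldType) (V E : finType) (n : nat) (vtx : 'I_n -> V)
    (P : pred E) (Arr : E -> 'M[k]_n) : Prop :=
  (0 < n)%N /\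
  forall Phi, is_endo vtx P Arr Phi -> exists c : k, Phi = c%:M.

Definition span_invariant (k : fieldType) (n : nat) (lo hi : nat) (Phi : 'M[k]_n)
  : Prop :=
  forall i j : 'I_n, (lo <= j < hi)%N -> ~~ (lo <= i < hi)%N -> Phi i j = 0.

(* Entry (i, j) of a matrix with natural-number indices (0 outside). *)
Definition mxnat (R : nzRingType) (m p : nat) (M : 'M[R]_(m, p)) (i j : nat) : R :=
  match @insub _ (fun x => (x < m)%N) _ i, @insub _ (fun x => (x < p)%N) _ j with
  | Some i', Some j' => M (i' : 'I_m) (j' : 'I_p)
  | _, _ => 0
  end.

(* Layout of the adapted basis (dims: Ker = ks, M'_s = r, Im = r, M'_t = ct):*)
(*   [0, ks)            basis of Ker phi_e'         |                     *)
(*   [ks, ks+r)         basis of M'_s               |  = basis of M_s     *)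
(*   [ks+r, ks+2r)      basis of Im phi_e'          |                     *)
(*   [ks+2r, ks+2r+ct)  basis of M'_t               |  = basis of M_t     *)
(*   [ks+2r+ct, n)      bases of the remaining vertex spaces              *)

(* phi_e' = [[0, phi], [0, 0]] in these coordinates. *)
Definition edge_mx (k : fieldType) (n ks r : nat) (phi : 'M[k]_r) : 'M[k]_n :=
  \matrix_(i, j)
    if ((ks + r <= i < ks + r + r) && (ks <= j < ks + r))%N
    then mxnat phi (i - (ks + r)) (j - ks) else 0.

(* Indeterminates: (0, i, j) = entry (i,j) of X21 (ct x ks), (1, i, j) of X11 *)
(* (r x ks, present iff b1), (2, i, j) of X22 (ct x r, present iff b2).      *)
Definition fvar_ok (b1 b2 : bool) (ks r ct : nat) (x : nat * nat * nat) : bool :=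
  [|| [&& x.1.1 == 0%N, (x.1.2 < ct)%N & (x.2 < ks)%N],
      [&& x.1.1 == 1%N, b1, (x.1.2 < r)%N & (x.2 < ks)%N]
    | [&& x.1.1 == 2%N, b2, (x.1.2 < ct)%N & (x.2 < r)%N]].

Definition fvar (b1 b2 : bool) (ks r ct : nat) : choiceType :=
  {x : nat * nat * nat | fvar_ok b1 b2 ks r ct x}.

Definition freealg (k : fieldType) (X : choiceType) := {malg k[{fmonom X}]}.

(* The indeterminate (blk, i, j) as an element of k<X> (0 if not an indeterminate). *)
Definition fX (k : fieldType) (b1 b2 : bool) (ks r ct : nat) (blk i j : nat)
  : freealg k (fvar b1 b2 ks r ct) :=
  oapp (fun x => << fmu x >>) 0 (@insub _ (fvar_ok b1 b2 ks r ct) _ (blk, i, j)).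

(* The image of e': f_e' in the (rows of M_t, cols of M_s) block, with    *)
(* f_e' = [[X11 (if b1) or 0, phi], [X21, X22 (if b2) or 0]].             *)
Definition edge_image (k : fieldType) (b1 b2 : bool) (n ks r ct : nat) (phi : 'M[k]_r)
  : 'M[freealg k (fvar b1 b2 ks r ct)]_n :=
  \matrix_(i, j)
    if (ks + r <= i < ks + r + r)%N then
      if (ks <= j < ks + r)%N then (mxnat phi (i - (ks + r)) (j - ks))%:A
      else if b1 && (j < ks)%N then fX k b1 b2 ks r ct 1 (i - (ks + r)) j
      else 0
    else if (ks + r + r <= i < ks + r + r + ct)%N then
      if (j < ks)%N then fX k b1 b2 ks r ct 0 (i - (ks + r + r)) j
      else if b2 && (ks <= j < ks + r)%N then fX k b1 b2 ks r ct 2 (i - (ks + r + r)) (j - ks)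
      else 0
    else 0.

Arguments edge_mx {k} n ks r phi.
Arguments edge_image {k} b1 b2 n ks r ct phi.
Arguments vdiag k {V n} vtx v.
Arguments fX k b1 b2 ks r ct blk i j.

From HB Require Import structures.
From mathcomp Require Import all_boot all_order all_algebra.
From mathcomp Require Import monalg.
From mathcomp Require Import zify.
Set Implicit Arguments. Unset Strict Implicit. Unset Printing Implicit Defensive.
Import GRing.Theory.
Local Open Scope ring_scope.

(* Let g, h : M_n(k<X>) -> T be ring morphisms agreeing on the image of f.
   Fix an index i0 and put zeta_pq := g(E_{i0,p}) h(E_{q,i0}).  Whenever
   g(M) = h(M), the family zeta intertwines the entries of M on the two sides:
   sum_s g(M_ps) zeta_sq = sum_t zeta_pt h(M_tq).  For the idempotents and the
   arrows of Q this says that zeta solves, over T, the k-linear equations that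
   cut out End(M); by linear duality it then satisfies every k-linear
   consequence of them, in particular the block vanishings expressed by the
   invariance hypotheses.  Those vanishings kill the contribution of the
   indeterminates in the equation coming from f(e'), so zeta also solves the
   equations of End(M'), and since M' is a brick, zeta = c 1 for some c in T.
   Hence g(y) c = c h(y) for the scalars and the entries y of f(e'), so for
   all of k<X>; summing over matrix units gives g = h. *)

Lemma sum_enum_rank (R : nmodType) (U : finType) (F : 'I_#|U| -> R) :
  \sum_(y < #|U|) F y = \sum_u F (enum_rank u).
Proof. by rewrite (reindex enum_rank) //; apply: onW_bij; apply: enum_rank_bij. Qed.

Section LinearDuality.
Variables (k : fieldType) (J U : finType) (C : J -> U -> k) (D : U -> k).

Hypothesis D_vanishing :
  forall v : U -> k, (forall j, \sum_u C j u * v u = 0) -> \sum_u D u * v u = 0.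

Lemma vanishing_functional_span :
  exists mu : J -> k, forall u, D u = \sum_j mu j * C j u.
Proof.
pose Cm := \matrix_(i < #|J|, x < #|U|) C (enum_val i) (enum_val x).
pose Dm := \row_(x < #|U|) D (enum_val x).
have : (Dm <= Cm)%MS.
  rewrite submxE; apply/eqP/matrixP => i x; rewrite !mxE sum_enum_rank.
  under eq_bigr do rewrite mxE enum_rankK.
  apply: D_vanishing => j.
  move/matrixP: (mulmx_coker Cm) => /(_ (enum_rank j) x).
  rewrite !mxE sum_enum_rank => Cj0; rewrite -[RHS]Cj0.
  by apply: eq_bigr => u _; rewrite [Cm _ _]mxE !enum_rankK.
case/submxP => M /matrixP DmE.
exists (fun j => M 0 (enum_rank j)) => u.
move: (DmE 0 (enum_rank u)); rewrite !mxE enum_rankK sum_enum_rank => ->.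
by apply: eq_bigr => j _; rewrite mxE !enum_rankK.
Qed.

(* D is a k-combination of the C j whose coefficients act on the left, so no
   commutativity is needed in T. *)
Lemma vanishing_functional_transfer (T : pzRingType) (gam : {rmorphism k -> T})
    (z : U -> T) :
  (forall j, \sum_u gam (C j u) * z u = 0) -> \sum_u gam (D u) * z u = 0.
Proof.
move=> Cz; have [mu Dmu] := vanishing_functional_span.
under eq_bigr do rewrite Dmu rmorph_sum mulr_suml.
rewrite exchange_big big1 // => j _.
under eq_bigr do rewrite rmorphM -mulrA.
by rewrite -mulr_sumr Cz mulr0.
Qed.

End LinearDuality.

Section FreeAlgebra.
Variables (k : fieldType) (X : choiceType).
Local Notation K := (freealg k X).

Lemma freealg_alg_malgC (c : k) : c%:A = c%:MP :> K.
Proof. by rewrite -mul_malgC mulr1. Qed.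

Lemma freealg_algC (c : k) (b : K) : c%:A * b = b * c%:A.
Proof.
rewrite freealg_alg_malgC mul_malgC !malgM_def fgmulgU malgZ_def /fgscale.
by apply: eq_bigr => m _; rewrite mulrC mulm1.
Qed.

Lemma freealg_ind (P : K -> Prop) :
  P 0 -> (forall a b, P a -> P b -> P (a + b)) ->
  (forall a b, P a -> P b -> P (a * b)) -> (forall c, P c%:A) ->
  (forall x, P << fmu x >>) -> forall y, P y.
Proof.
move=> P0 PD PM PC PX y; rewrite [y]monalgE; apply: big_ind => // m _.
have -> : << y@_m *g m >> = (y@_m)%:A * << m >> :> K.
  by rewrite freealg_alg_malgC malgM_def fgmulUU mulr1 mul1m.
apply: (PM) => //; case: m => s; elim: s => [|x s IHs].
  have -> : FMonom [::] = (mone : fmonom X) by apply/val_inj; rewrite /= fm1.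
  by rewrite -[<< _ >>]/(1%:MP) mpolyC1E -(scale1r (1 : K)); apply: PC.
have -> : FMonom (x :: s) = mmul (fmu x) (FMonom s).
  by apply/val_inj; rewrite /= fmM fmU.
have -> : << mmul (fmu x) (FMonom s) >> = << fmu x >> * << FMonom s >> :> K.
  by rewrite malgM_def fgmulUU mulr1.
exact: PM.
Qed.

Lemma freealg_intertwine (T : pzRingType) (u v : {rmorphism K -> T}) (t : T) :
  (forall c, u c%:A * t = t * v c%:A) ->
  (forall x, u << fmu x >> * t = t * v << fmu x >>) ->
  forall y, u y * t = t * v y.
Proof.
move=> uv_alg uv_var; apply: freealg_ind => //.
- by rewrite !rmorph0 mul0r mulr0.
- by move=> a b uva uvb; rewrite !rmorphD mulrDl mulrDr uva uvb.
- by move=> a b uva uvb; rewrite !rmorphM -mulrA uvb mulrA uva mulrA.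
Qed.

End FreeAlgebra.

Section MatrixUnits.
Variables (R : pzRingType) (n : nat).
Implicit Types (M : 'M[R]_n) (p q : 'I_n).

Lemma delta_mul_sum (i0 : 'I_n) p M : delta_mx i0 p * M = \sum_s (M p s)%:M * delta_mx i0 s.
Proof.
apply/matrixP => a b; rewrite !mxE summxE.
rewrite (bigD1 p) //= big1 => [|l /negPf nl]; last by rewrite !mxE nl andbF mul0r.
rewrite (bigD1 b) //= big1 => [|s /negPf ns]; last first.
  by rewrite !mxE big1 // => l _; rewrite !mxE [b == s]eq_sym ns andbF mulr0.
rewrite !mxE !eqxx andbT !addr0.
rewrite (bigD1 a) //= big1 => [|l /negPf nl]; last by rewrite !mxE eq_sym nl mulr0n mul0r.
rewrite !mxE !eqxx mulr1n andbT addr0.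
by case: (a == i0); rewrite ?mulr1 ?mulr0 ?mul1r ?mul0r.
Qed.

Lemma mul_delta_sum (i0 : 'I_n) q M : M * delta_mx q i0 = \sum_t delta_mx t i0 * (M t q)%:M.
Proof.
apply/matrixP => a b; rewrite !mxE summxE.
rewrite (bigD1 q) //= big1 => [|l /negPf nl]; last by rewrite !mxE nl mulr0.
rewrite (bigD1 a) //= big1 => [|s /negPf ns]; last first.
  by rewrite !mxE big1 // => l _; rewrite !mxE [a == s]eq_sym ns mul0r.
rewrite !mxE !eqxx !addr0.
rewrite (bigD1 i0) //= big1 => [|l /negPf nl]; last by rewrite !mxE nl andbF mul0r.
rewrite !mxE !eqxx /= mul1r addr0 [b == i0]eq_sym.
by case: (i0 == b); rewrite ?mulr1n ?mulr0n ?mulr1 ?mulr0.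
Qed.

Lemma mx1_sum_delta_delta (i0 : 'I_n) : 1 = \sum_p delta_mx p i0 * delta_mx i0 p :> 'M[R]_n.
Proof.
rewrite -[1]/(1%:M) mx1_sum_delta; apply: eq_bigr => p _.
by rewrite -mulmxE mul_delta_mx.
Qed.

Lemma scalar_mx_central (a : R) M : (forall b, a * b = b * a) -> a%:M * M = M * a%:M.
Proof.
move=> a_central; apply/matrixP => i j; rewrite !mxE.
rewrite (bigD1 i) //= big1 => [|l /negPf nl]; last by rewrite !mxE eq_sym nl mulr0n mul0r.
rewrite [RHS](bigD1 j) //= [X in _ = _ + X]big1 => [|l /negPf nl]; last first.
  by rewrite !mxE nl mulr0n mulr0.
by rewrite !mxE !eqxx !mulr1n !addr0 a_central.
Qed.

End MatrixUnits.

Section VertexProjections.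
Variables (V E : finType) (src tgt : E -> V) (n : nat) (vtx : 'I_n -> V).

Definition vproj (R : pzRingType) (v : V) : 'M[R]_n :=
  \matrix_(i, j) ((i == j) && (vtx i == v))%:R.

Lemma map_vdiag (k : fieldType) (R : pzRingType) (f : {rmorphism k -> R}) v :
  map_mx f (vdiag k vtx v) = vproj R v.
Proof. by apply/matrixP => i j; rewrite !mxE rmorph_nat. Qed.

Variable R : pzRingType.

Lemma vprojMl v (M : 'M[R]_n) i j : (vproj R v * M) i j = (vtx i == v)%:R * M i j.
Proof.
rewrite -mulmxE mxE (bigD1 i) //= big1 => [|l /negPf nl]; last by rewrite mxE eq_sym nl mul0r.
by rewrite mxE eqxx /= addr0.
Qed.

Lemma vprojMr v (M : 'M[R]_n) i j : (M * vproj R v) i j = M i j * (vtx j == v)%:R.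
Proof.
rewrite -mulmxE mxE (bigD1 j) //= big1 => [|l /negPf nl]; last by rewrite mxE nl mulr0.
by rewrite mxE eqxx /= addr0.
Qed.

Lemma vproj_quiver_rels (xB : E -> 'M[R]_n) :
  (forall a i j, xB a i j != 0 -> (vtx i == tgt a) && (vtx j == src a)) ->
  quiver_rels src tgt (vproj R) xB.
Proof.
move=> xB_support; split.
- move=> v; apply/matrixP => i j; rewrite vprojMl mxE.
  by case: (vtx i == v); case: (i == j); rewrite /= ?mul1r ?mul0r.
- move=> v w nvw; apply/matrixP => i j; rewrite vprojMl !mxE.
  have [->|_] := eqVneq (vtx i) v; last by rewrite mulr0n mul0r.
  by rewrite (negPf nvw) andbF mulr0n mulr0.
- apply/matrixP => i j; rewrite summxE !mxE (bigD1 (vtx i)) //= big1.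
    by rewrite mxE eqxx andbT addr0.
  by move=> v nv; rewrite mxE [vtx i == _]eq_sym (negPf nv) andbF.
move=> a; apply/matrixP => i j; rewrite vprojMr vprojMl.
have [->|nz] := eqVneq (xB a i j) 0; first by rewrite mulr0 mul0r.
by case/andP: (xB_support a i j nz) => -> ->; rewrite mul1r mulr1.
Qed.

End VertexProjections.

Section MatrixRingMorphisms.
Variables (K T : pzRingType) (n : nat) (g h : {rmorphism 'M[K]_n -> T}) (i0 : 'I_n).

Definition zeta p q := g (delta_mx i0 p) * h (delta_mx q i0).

Lemma zeta_intertwine (M : 'M[K]_n) : g M = h M -> forall p q,
  \sum_s g (M p s)%:M * zeta s q = \sum_t zeta p t * h (M t q)%:M.
Proof.
move=> gMh p q.
have : g (delta_mx i0 p * M) * h (delta_mx q i0) = g (delta_mx i0 p) * h (M * delta_mx q i0).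
  by rewrite !rmorphM gMh mulrA.
rewrite delta_mul_sum mul_delta_sum !rmorph_sum mulr_suml mulr_sumr => sumE.
transitivity (\sum_s g ((M p s)%:M * delta_mx i0 s) * h (delta_mx q i0)).
  by apply: eq_bigr => s _; rewrite rmorphM mulrA.
by rewrite sumE; apply: eq_bigr => t _; rewrite rmorphM mulrA.
Qed.

Lemma zeta_central (a : K) : (forall b, a * b = b * a) -> g a%:M = h a%:M ->
  forall p q, g a%:M * zeta p q = zeta p q * h a%:M.
Proof.
move=> a_central gah p q.
rewrite /zeta mulrA -rmorphM scalar_mx_central // rmorphM -mulrA gah.
by rewrite -rmorphM scalar_mx_central // rmorphM mulrA.
Qed.

Hypothesis zeta_scalar : forall p q, zeta p q = if p == q then zeta i0 i0 else 0.

Lemma zeta_scalar_entry (M : 'M[K]_n) : g M = h M ->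
  forall p q, g (M p q)%:M * zeta i0 i0 = zeta i0 i0 * h (M p q)%:M.
Proof.
move=> gMh p q; have := zeta_intertwine gMh p q.
rewrite (bigD1 q) // big1 => [|s /negPf nsq]; last by rewrite zeta_scalar nsq mulr0.
rewrite [in RHS](bigD1 p) // big1 => [|t /negPf ntp]; last first.
  by rewrite zeta_scalar eq_sym ntp mul0r.
by rewrite (zeta_scalar q) (zeta_scalar p) !eqxx /= !addr0.
Qed.

Lemma eq_rmorph_zeta_scalar :
  (forall y : K, g y%:M * zeta i0 i0 = zeta i0 i0 * h y%:M) -> g =1 h.
Proof.
move=> zeta_commute M.
have one_split : \sum_p g (delta_mx p i0) * zeta i0 i0 * h (delta_mx i0 p) = 1.
  transitivity (g 1 * h 1); last by rewrite !rmorph1 mulr1.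
  rewrite (mx1_sum_delta_delta _ i0) !rmorph_sum mulr_suml; apply: eq_bigr => p _.
  rewrite mulr_sumr (bigD1 p) //= big1 => [|q /negPf nqp]; last first.
    by rewrite !rmorphM mulrA -(mulrA (g _)) -/(zeta p q) zeta_scalar eq_sym nqp mulr0 mul0r.
  rewrite addr0 !rmorphM [RHS]mulrA -[in RHS](mulrA (g _)) -/(zeta p p).
  by rewrite (zeta_scalar p) eqxx mulrA.
rewrite -[g M]mulr1 -one_split mulr_sumr.
transitivity (\sum_p g (M * delta_mx p i0) * zeta i0 i0 * h (delta_mx i0 p)).
  by apply: eq_bigr => p _; rewrite rmorphM !mulrA.
under eq_bigr => p _ do rewrite mul_delta_sum rmorph_sum !mulr_suml.
have moveM p t : g (delta_mx t i0 * (M t p)%:M) * zeta i0 i0 * h (delta_mx i0 p) =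
    g (delta_mx t i0) * zeta i0 i0 * h ((M t p)%:M * delta_mx i0 p).
  by rewrite !rmorphM -(mulrA (g (delta_mx t i0))) zeta_commute !mulrA.
under eq_bigr => p _ do under eq_bigr => t _ do rewrite moveM.
rewrite exchange_big /=.
under eq_bigr => t _ do rewrite -mulr_sumr -rmorph_sum -delta_mul_sum rmorphM mulrA.
by rewrite -mulr_suml one_split mul1r.
Qed.

End MatrixRingMorphisms.

Section CommutatorCoefficients.
Variables (k : fieldType) (n : nat).

(* The coefficient of Phi u.1 u.2 in the entry (p, q) of Phi b - b Phi. *)
Definition commutator_coef (b : 'M[k]_n) (p q : 'I_n) (u : 'I_n * 'I_n) : k :=
  (u.1 == p)%:R * b u.2 q - (u.2 == q)%:R * b p u.1.

Lemma sum_commutator_coef (R : pzRingType) (f : {rmorphism k -> R})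
    (w : 'I_n -> 'I_n -> R) b p q :
  (forall c i j, f c * w i j = w i j * f c) ->
  \sum_u f (commutator_coef b p q u) * w u.1 u.2 =
    \sum_s w p s * f (b s q) - \sum_t f (b p t) * w t q.
Proof.
move=> f_central; rewrite -(pair_bigA _ (fun i j => f (commutator_coef b p q (i, j)) * w i j)) /=.
under eq_bigr do under eq_bigr do rewrite /commutator_coef /= rmorphB mulrBl !rmorphM.
under eq_bigr do rewrite sumrB.
rewrite sumrB; congr (_ - _).
  rewrite (bigD1 p) //= [X in _ + X = _]big1 => [|i /negPf nip]; last first.
    by rewrite big1 // => j _; rewrite nip rmorph0 !mul0r.
  by rewrite eqxx rmorph1 addr0; apply: eq_bigr => j _; rewrite mul1r f_central.
rewrite exchange_big (bigD1 q) //= [X in _ + X = _]big1 => [|j /negPf njq]; last first.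
  by rewrite big1 // => i _; rewrite njq rmorph0 !mul0r.
by rewrite eqxx rmorph1 addr0; apply: eq_bigr => i _; rewrite mul1r.
Qed.

Lemma sum_pair_delta (R : pzRingType) (f : {rmorphism k -> R}) (w : 'I_n -> 'I_n -> R) x :
  \sum_u f ((u == x)%:R) * w u.1 u.2 = w x.1 x.2.
Proof.
rewrite (bigD1 x) //= big1 => [|u /negPf nux]; last by rewrite nux rmorph0 mul0r.
by rewrite eqxx rmorph1 mul1r addr0.
Qed.

End CommutatorCoefficients.

Section EndomorphismsOver.
Variables (k : fieldType) (V E : finType) (n : nat) (vtx : 'I_n -> V) (Arr : E -> 'M[k]_n).

Definition endo_eqn (P : pred E) (j : ('I_n * 'I_n) + (E * ('I_n * 'I_n)))
    (u : 'I_n * 'I_n) : k :=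
  match j with
  | inl x => if vtx x.1 != vtx x.2 then (u == x)%:R else 0
  | inr y => if P y.1 then commutator_coef (Arr y.1) y.2.1 y.2.2 u else 0
  end.

Lemma endo_eqn_is_endo P (Phi : 'M[k]_n) :
  (forall j, \sum_u endo_eqn P j u * Phi u.1 u.2 = 0) -> is_endo vtx P Arr Phi.
Proof.
move=> Phi_eqn; split.
  move=> i j nij; have := Phi_eqn (inl (i, j)); rewrite /= nij.
  by rewrite -(sum_pair_delta idfun (fun i j => Phi i j) (i, j)).
move=> a Pa; apply/matrixP => p q; have := Phi_eqn (inr (a, (p, q))); rewrite /= Pa.
rewrite (sum_commutator_coef (f := idfun) (w := fun i j => Phi i j)) /=; last first.
  by move=> *; rewrite mulrC.
move/eqP; rewrite subr_eq0 => /eqP PhiA; rewrite !mxE PhiA.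
by apply: eq_bigr => *; rewrite mulrC.
Qed.

Variables (T : pzRingType) (gam : {rmorphism k -> T}) (w : 'I_n -> 'I_n -> T).

Definition is_endo_over (P : pred E) : Prop :=
  (forall i j, vtx i != vtx j -> w i j = 0) /\
  (forall a, P a -> forall p q,
     \sum_s w p s * gam (Arr a s q) = \sum_t gam (Arr a p t) * w t q).

Hypothesis w_central : forall c i j, gam c * w i j = w i j * gam c.

Lemma is_endo_over_eqn P : is_endo_over P ->
  forall j, \sum_u gam (endo_eqn P j u) * w u.1 u.2 = 0.
Proof.
case=> w_block w_arrow [[i j]|[a [p q]]] /=.
  have [nij|_] := boolP (vtx i != vtx j); last first.
    by apply: big1 => u _; rewrite rmorph0 mul0r.
  by rewrite (sum_pair_delta gam (fun i j => w i j) (i, j)) w_block.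
have [Pa|_] := boolP (P a); last by apply: big1 => u _; rewrite rmorph0 mul0r.
by rewrite (sum_commutator_coef (w := fun i j => w i j)) // w_arrow // subrr.
Qed.

Lemma is_endo_over_lin P (D : 'I_n * 'I_n -> k) : is_endo_over P ->
  (forall Phi, is_endo vtx P Arr Phi -> \sum_u D u * Phi u.1 u.2 = 0) ->
  \sum_u gam (D u) * w u.1 u.2 = 0.
Proof.
move=> wP D_endo; apply: (vanishing_functional_transfer (C := endo_eqn P));
  last exact: is_endo_over_eqn.
move=> v v_eqn; pose Phi := \matrix_(i, j) v (i, j).
have -> : \sum_u D u * v u = \sum_u D u * Phi u.1 u.2.
  by apply: eq_bigr => -[i j] _; rewrite mxE.
apply: D_endo; apply: endo_eqn_is_endo => j; rewrite -[RHS](v_eqn j).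
by apply: eq_bigr => -[i j'] _; rewrite mxE.
Qed.

Lemma is_endo_over_entry0 P i j : is_endo_over P ->
  (forall Phi, is_endo vtx P Arr Phi -> Phi i j = 0) -> w i j = 0.
Proof.
move=> wP Phi_ij; rewrite -(sum_pair_delta gam (fun i j => w i j) (i, j)).
apply: (is_endo_over_lin wP) => Phi PhiP.
by rewrite (sum_pair_delta idfun (fun i j => Phi i j) (i, j)) /= Phi_ij.
Qed.

Lemma brick_endo_over_scalar (i0 : 'I_n) : is_brick vtx predT Arr ->
  is_endo_over predT -> forall p q, w p q = if p == q then w i0 i0 else 0.
Proof.
move=> brick wT p q; case: eqP => [<-|/eqP npq].
  apply/eqP; rewrite -subr_eq0 -(sum_pair_delta gam (fun i j => w i j) (p, p)).
  rewrite -(sum_pair_delta gam (fun i j => w i j) (i0, i0)) -sumrB.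
  under eq_bigr do rewrite -mulrBl -rmorphB.
  apply/eqP/(is_endo_over_lin wT) => Phi PhiT.
  under eq_bigr do rewrite mulrBl; rewrite sumrB.
  rewrite (sum_pair_delta idfun (fun i j => Phi i j) (p, p)).
  rewrite (sum_pair_delta idfun (fun i j => Phi i j) (i0, i0)) /=.
  by have [c ->] := brick.2 Phi PhiT; rewrite !mxE !eqxx subrr.
apply: is_endo_over_entry0 wT _ => Phi PhiT.
by have [c ->] := brick.2 Phi PhiT; rewrite mxE (negPf npq) mulr0n.
Qed.

End EndomorphismsOver.

Section ZetaEndomorphism.
Variables (k : fieldType) (K : lalgType k) (V E : finType) (n : nat).
Variables (vtx : 'I_n -> V) (Arr : E -> 'M[k]_n).
Variables (T : pzRingType) (g h : {rmorphism 'M[K]_n -> T}) (i0 : 'I_n).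
Hypothesis algC : forall (c : k) (b : K), c%:A * b = b * c%:A.
Hypothesis gh_alg : forall c : k, g (c%:A)%:M = h (c%:A)%:M.
Local Notation gam := (g \o (scalar_mx \o in_alg K)).
Local Notation z := (zeta g h i0).

Lemma zeta_algC c p q : gam c * z p q = z p q * gam c.
Proof. by have := zeta_central i0 (algC c) (gh_alg c) p q; rewrite -gh_alg. Qed.

Lemma zeta_intertwine_alg (b : 'M[k]_n) :
  g (map_mx (in_alg K) b) = h (map_mx (in_alg K) b) ->
  forall p q, \sum_s gam (b p s) * z s q = \sum_t z p t * gam (b t q).
Proof.
move=> gbh p q; have := zeta_intertwine i0 gbh p q.
under eq_bigr do rewrite mxE.
by under [in X in _ = X -> _]eq_bigr do rewrite mxE -gh_alg.
Qed.

Lemma zeta_endo_over (P : pred E) :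
  (forall v, g (map_mx (in_alg K) (vdiag k vtx v)) = h (map_mx (in_alg K) (vdiag k vtx v))) ->
  (forall a, P a -> g (map_mx (in_alg K) (Arr a)) = h (map_mx (in_alg K) (Arr a))) ->
  is_endo_over vtx Arr gam z P.
Proof.
move=> gh_vertex gh_arrow; split=> [i j nij | a Pa p q]; last first.
  by rewrite (zeta_intertwine_alg (gh_arrow a Pa)).
have := zeta_intertwine_alg (gh_vertex (vtx i)) i j.
rewrite (bigD1 i) // big1 => [|s /andP [_ nsi]]; last first.
  by rewrite mxE eq_sym (negPf nsi) rmorph0 mul0r.
rewrite [RHS](bigD1 j) // big1 => [|t /andP [_ ntj]]; last first.
  by rewrite mxE (negPf ntj) rmorph0 mulr0.
by rewrite !mxE !eqxx eq_sym (negPf nij) !rmorph_nat /= mulr1n mulr0n mul1r mulr0 !addr0.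
Qed.

End ZetaEndomorphism.

Section EdgeImage.
Variables (k : fieldType) (V E : finType) (src tgt : E -> V) (e' : E).
Variables (ks r ct n : nat) (vtx : 'I_n -> V) (phi : 'M[k]_r) (b1 b2 : bool).
Local Notation F := (edge_image b1 b2 n ks r ct phi).
Local Notation B := (edge_mx n ks r phi).
Local Notation inKer i := (i < ks)%N.
Local Notation inMs i := (ks <= i < ks + r)%N.
Local Notation inIm i := (ks + r <= i < ks + r + r)%N.
Local Notation inMt i := (ks + r + r <= i < ks + r + r + ct)%N.

Lemma edge_mx_out (i j : 'I_n) : ~~ (inIm i && inMs j) -> B i j = 0.
Proof. by move=> /negPf out; rewrite mxE out. Qed.

Lemma edge_image_Im_row (p s : 'I_n) : inIm p -> ~~ (b1 && inKer s) -> F p s = (B p s)%:A.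
Proof.
move=> pIm /negPf ns; rewrite !mxE pIm /=.
by case: ifP => // _; rewrite ns scale0r.
Qed.

Lemma edge_image_Ms_col (t q : 'I_n) : inMs q -> ~~ (b2 && inMt t) -> F t q = (B t q)%:A.
Proof.
move=> qMs /negPf nt; rewrite !mxE qMs andbT.
case: ifP => // tIm; case: ifP => [tMt|_]; last by rewrite scale0r.
have -> : (q < ks)%N = false by lia.
by move: nt; rewrite tMt andbT => ->; rewrite scale0r.
Qed.

Hypothesis Hs : forall i : 'I_n, (vtx i == src e') = (i < ks + r)%N.
Hypothesis Ht : forall i : 'I_n, (vtx i == tgt e') = (ks + r <= i < ks + r + r + ct)%N.

Lemma edge_image_support (i j : 'I_n) :
  F i j != 0 -> (vtx i == tgt e') && (vtx j == src e').
Proof.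
rewrite mxE Ht Hs.
by repeat case: ifP; rewrite ?eqxx // => *; apply/andP; split; lia.
Qed.

Hypothesis Hn : (ks + r + r + ct <= n)%N.

Lemma edge_image_var (x : fvar b1 b2 ks r ct) : exists p q, F p q = << fmu x >>.
Proof.
case: x => [[[blk i] j] ok].
have -> : << fmu (exist _ (blk, i, j) ok : fvar b1 b2 ks r ct) >> = fX k b1 b2 ks r ct blk i j.
  by rewrite /fX (insubT (fvar_ok b1 b2 ks r ct) ok).
move: (ok); rewrite /fvar_ok /= => /or3P [/and3P [/eqP-> hi hj] | /and4P [/eqP-> hb hi hj]
  | /and4P [/eqP-> hb hi hj]].
- have hp : (ks + r + r + i < n)%N by lia.
  have hq : (j < n)%N by lia.
  exists (Ordinal hp), (Ordinal hq); rewrite mxE /=.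
  by repeat case: ifP; intros; first [congr fX; lia | lia].
- have hp : (ks + r + i < n)%N by lia.
  have hq : (j < n)%N by lia.
  exists (Ordinal hp), (Ordinal hq); rewrite mxE /=.
  by repeat case: ifP; intros; first [congr fX; lia | lia].
- have hp : (ks + r + r + i < n)%N by lia.
  have hq : (ks + j < n)%N by lia.
  exists (Ordinal hp), (Ordinal hq); rewrite mxE /=.
  by repeat case: ifP; intros; first [congr fX; lia | lia].
Qed.

End EdgeImage.

Section EdgeEndomorphism.
Variables (k : fieldType) (V E : finType) (src : E -> V) (e' : E).
Variables (ks r ct n : nat) (vtx : 'I_n -> V) (Arr : E -> 'M[k]_n) (phi : 'M[k]_r).
Variables (b1 b2 : bool).
Local Notation K := (freealg k (fvar b1 b2 ks r ct)).
Local Notation F := (edge_image b1 b2 n ks r ct phi).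
Local Notation B := (edge_mx n ks r phi).
Local Notation Q_endo Phi := (is_endo vtx (predC1 e') Arr Phi).
Local Notation inKer i := (i < ks)%N.
Local Notation inMs i := (ks <= i < ks + r)%N.
Local Notation inIm i := (ks + r <= i < ks + r + r)%N.
Local Notation inMt i := (ks + r + r <= i < ks + r + r + ct)%N.

Hypothesis Hs : forall i : 'I_n, (vtx i == src e') = (i < ks + r)%N.
Hypothesis He' : Arr e' = B.
Hypothesis HKer : forall Phi, Q_endo Phi -> span_invariant 0 ks Phi.
Hypothesis HIm : forall Phi, Q_endo Phi -> span_invariant (ks + r) (ks + r + r) Phi.
Hypothesis Hb1 : b1 -> forall Phi, Q_endo Phi -> span_invariant ks (ks + r) Phi.
Hypothesis Hb2 : b2 -> forall Phi, Q_endo Phi ->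
  span_invariant (ks + r + r) (ks + r + r + ct) Phi.

Variables (T : pzRingType) (gam : {rmorphism k -> T}) (w : 'I_n -> 'I_n -> T).
Variables (gF hF : K -> T).
Hypothesis w_central : forall c i j, gam c * w i j = w i j * gam c.
Hypotheses (gF_alg : forall c, gF c%:A = gam c) (hF_alg : forall c, hF c%:A = gam c).
Hypothesis w_F : forall p q, \sum_s gF (F p s) * w s q = \sum_t w p t * hF (F t q).

(* The indeterminates of F only meet entries of w that the invariance
   hypotheses force to vanish, so the equation of F reduces to that of B. *)
Lemma edge_endo_over :
  is_endo_over vtx Arr gam w (predC1 e') -> is_endo_over vtx Arr gam w predT.
Proof.
move=> wQ; split=> [|a _ p q]; first exact: wQ.1.
have [->|ne] := eqVneq a e'; last exact: wQ.2.
rewrite He'.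
have w0 i j := is_endo_over_entry0 w_central (i := i) (j := j) wQ.
have [/andP [pIm qMs] | nPQ] := boolP (inIm p && inMs q).
  transitivity (\sum_t w p t * hF (F t q)).
    apply: eq_bigr => t _; have [/andP [b2T tMt]|nt] := boolP (b2 && inMt t).
      by rewrite (w0 p t) ?mul0r // => Phi /(Hb2 b2T); apply => //; lia.
    by rewrite edge_image_Ms_col // hF_alg.
  rewrite -w_F; apply: eq_bigr => s _; have [/andP [b1T sKer]|ns] := boolP (b1 && inKer s).
    by rewrite (w0 s q) ?mulr0 // => Phi /(Hb1 b1T); apply => //; lia.
  by rewrite edge_image_Im_row // gF_alg.
rewrite !big1 // => s _.
  have [/andP [pIm sMs]|nps] := boolP (inIm p && inMs s).
    have [qKer|qKer] := boolP (inKer q).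
      by rewrite (w0 s q) ?mulr0 // => Phi /HKer; apply => //; lia.
    rewrite wQ.1 ?mulr0 //; apply/negP => /eqP vtx_sq.
    by move: (Hs q); rewrite -vtx_sq Hs; lia.
  by rewrite edge_mx_out // rmorph0 mul0r.
have [/andP [sIm qMs]|nsq] := boolP (inIm s && inMs q).
  by rewrite (w0 p s) ?mul0r // => Phi /HIm; apply => //; lia.
by rewrite edge_mx_out // rmorph0 mulr0.
Qed.

End EdgeEndomorphism.

Section EdgeRingEpi.
Variables (k : fieldType) (V E : finType) (src : E -> V) (e' : E).
Variables (ks r ct n : nat) (vtx : 'I_n -> V) (Arr : E -> 'M[k]_n) (phi : 'M[k]_r).
Variables (b1 b2 : bool).
Local Notation K := (freealg k (fvar b1 b2 ks r ct)).
Local Notation F := (edge_image b1 b2 n ks r ct phi).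
Local Notation Q_endo Phi := (is_endo vtx (predC1 e') Arr Phi).

Hypothesis Hn : (ks + r + r + ct <= n)%N.
Hypothesis Hs : forall i : 'I_n, (vtx i == src e') = (i < ks + r)%N.
Hypothesis He' : Arr e' = edge_mx n ks r phi.
Hypothesis Hbrick : is_brick vtx predT Arr.
Hypothesis HKer : forall Phi, Q_endo Phi -> span_invariant 0 ks Phi.
Hypothesis HIm : forall Phi, Q_endo Phi -> span_invariant (ks + r) (ks + r + r) Phi.
Hypothesis Hb1 : b1 -> forall Phi, Q_endo Phi -> span_invariant ks (ks + r) Phi.
Hypothesis Hb2 : b2 -> forall Phi, Q_endo Phi ->
  span_invariant (ks + r + r) (ks + r + r + ct) Phi.

Lemma edge_rmorph_eq (T : pzRingType) (g h : {rmorphism 'M[K]_n -> T}) :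
  (forall c : k, g (c%:A)%:M = h (c%:A)%:M) ->
  (forall v, g (map_mx (in_alg K) (vdiag k vtx v)) = h (map_mx (in_alg K) (vdiag k vtx v))) ->
  (forall a, a != e' -> g (map_mx (in_alg K) (Arr a)) = h (map_mx (in_alg K) (Arr a))) ->
  g F = h F -> g =1 h.
Proof.
move=> gh_alg gh_vertex gh_arrow gh_F; pose i0 := Ordinal Hbrick.1.
have z_algC := zeta_algC i0 (@freealg_algC k _) gh_alg.
have zQ := zeta_endo_over i0 gh_alg gh_vertex (P := predC1 e') gh_arrow.
have zT := edge_endo_over Hs He' HKer HIm Hb1 Hb2 z_algC (gF := g \o scalar_mx)
  (hF := h \o scalar_mx) (fun=> erefl) (fun c => esym (gh_alg c)) (zeta_intertwine i0 gh_F) zQ.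
have z_scalar := brick_endo_over_scalar z_algC i0 Hbrick zT.
apply: (eq_rmorph_zeta_scalar z_scalar) => y.
apply: (freealg_intertwine (u := g \o scalar_mx) (v := h \o scalar_mx)) => [c|x].
  exact (zeta_central i0 (freealg_algC c) (gh_alg c) i0 i0).
have [p [q <-]] := edge_image_var phi Hn x.
exact (zeta_scalar_entry z_scalar gh_F p q).
Qed.

End EdgeRingEpi.

Theorem mainTheorem13
  (k : closedFieldType)
  (V E : finType) (src tgt : E -> V) (e' : E)
  (Hacyc : acyclic src tgt)
  (A : algType k) (eA : V -> A) (xA : E -> A)
  (HA : is_path_algebra src tgt eA xA)
  (ks r ct n : nat) (vtx : 'I_n -> V) (Arr : E -> 'M[k]_n) (phi : 'M[k]_r)
  (Hn : (ks + r + r + ct <= n)%N)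
  (Hs : forall i : 'I_n, (vtx i == src e') = (i < ks + r)%N)
  (Ht : forall i : 'I_n, (vtx i == tgt e') = (ks + r <= i < ks + r + r + ct)%N)
  (Hrep : is_rep src tgt vtx Arr)
  (He' : Arr e' = edge_mx n ks r phi)
  (Hphi : phi \in unitmx)
  (Hnotfull : (r < minn (ks + r) (r + ct))%N)
  (Hbrick : is_brick vtx predT Arr)
  (HKer : forall Phi, is_endo vtx (predC1 e') Arr Phi -> span_invariant 0 ks Phi)
  (HIm : forall Phi, is_endo vtx (predC1 e') Arr Phi ->
           span_invariant (ks + r) (ks + r + r) Phi)
  (b1 b2 : bool)
  (Hb1 : b1 -> forall Phi, is_endo vtx (predC1 e') Arr Phi ->
           span_invariant ks (ks + r) Phi)
  (Hb2 : b2 -> forall Phi, is_endo vtx (predC1 e') Arr Phi ->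
           span_invariant (ks + r + r) (ks + r + r + ct) Phi) :
  exists f : {rmorphism A -> 'M[freealg k (fvar b1 b2 ks r ct)]_n},
    [/\ forall c : k, f (c%:A) = (c%:A)%:M,
        forall v, f (eA v) = map_mx (fun c : k => c%:A) (vdiag k vtx v),
        forall a, a != e' -> f (xA a) = map_mx (fun c : k => c%:A) (Arr a),
        f (xA e') = edge_image b1 b2 n ks r ct phi
      & ring_epi f].
Proof.
set K := freealg k (fvar b1 b2 ks r ct).
pose xB a := if a == e' then edge_image b1 b2 n ks r ct phi else map_mx (in_alg K) (Arr a).
have xB_support a i j : xB a i j != 0 -> (vtx i == tgt a) && (vtx j == src a).
  rewrite /xB; have [->|_] := eqVneq a e'; first exact: edge_image_support.
  by rewrite mxE => nz; apply: Hrep; apply: contra nz => /eqP ->; rewrite rmorph0.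
have sigma_central c (b : 'M[K]_n) : (c%:A : K)%:M * b = b * (c%:A)%:M.
  by apply: scalar_mx_central; apply: freealg_algC.
have [f [f_alg f_vertex f_arrow _]] :=
  HA.2 _ (scalar_mx \o in_alg K) _ _ sigma_central (vproj_quiver_rels xB_support).
have f_vdiag v : f (eA v) = map_mx (in_alg K) (vdiag k vtx v) by rewrite f_vertex map_vdiag.
have f_Arr a : a != e' -> f (xA a) = map_mx (in_alg K) (Arr a).
  by move=> ne; rewrite f_arrow /xB (negPf ne).
have f_e' : f (xA e') = edge_image b1 b2 n ks r ct phi by rewrite f_arrow /xB eqxx.
exists f; split => // T g h gh_f; apply: (edge_rmorph_eq Hn Hs He' Hbrick HKer HIm Hb1 Hb2).
- by move=> c; have := gh_f c%:A; rewrite f_alg.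
- by move=> v; have := gh_f (eA v); rewrite f_vdiag.
- by move=> a ne; have := gh_f (xA a); rewrite f_Arr.
- by have := gh_f (xA e'); rewrite f_e'.
Qed.
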